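(* There exist constants $\bar x^e,\bar u^e$, independent of $N$ and $W$, such that $\|x^e_t\|\le\bar x^e$ and $\|u^e_t\|\le\bar u^e$ for all $0\le t\le N-1$. Moreover, the states and controls of FOSS satisfy $\|x_t(0)\|\le\sqrt n\,\bar x^e$ for $0\le t\le N$ and $\|u_t(0)\|\le\sqrt n\,\bar u^e$ for $0\le t\le N-1$.
   Context: Setting: $(A,B)$ in canonical form (indices $0=k_0<k_1<\dots<k_m=n$, $\mathcal I=\{k_1,\dots,k_m\}$; rows $i\notin\mathcal I$ of $A$ equal $e_{i+1}^\top$; $j$-th column of $B$ is $e_{k_j}$; $A(\mathcal I,:)$ = rows of $A$ indexed by $\mathcal I$; $x^{\mathcal I}=(x^{k_1},\dots,x^{k_m})^\top$). Dynamics $x_{t+1}=Ax_t+Bu_t$, $x_0=0$. Standing assumptions: $f_t$ $\mu_f$-strongly convex and $l_f$-smooth, $g_t$ convex and $l_g$-smooth, minimizers $\theta_t$ of $f_t$ and $\xi_t$ of $g_t$ satisfy $\|\theta_t\|\le\bar\theta$, $\|\xi_t\|\le\bar\xi$ for all $t$. Optimal steady state $(x^e_t,u^e_t)=\arg\min\{f_t(x)+g_t(u):x=Ax+Bu\}$. FOSS: controller $u_t(0)=z_{t+1}(0)-A(\mathcal I,:)x_t(0)$ with $z_{t+1}(0)=(x^e_t)^{\mathcal I}$, $x_{t+1}(0)=Ax_t(0)+Bu_t(0)$, $x_0(0)=0$. *)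

From Stdlib Require Import Reals.
From mathcomp Require Import all_boot.
Set Implicit Arguments. Unset Strict Implicit. Unset Printing Implicit Defensive.
Local Open Scope R_scope.

(* Vectors of R^n and p x q real matrices.  Ordinal i : 'I_n stands for the
   paper's (1-based) coordinate index i+1. *)
Definition vec (n : nat) := 'I_n -> R.
Definition mat (p q : nat) := 'I_p -> 'I_q -> R.

Definition vzero n : vec n := fun _ => 0.
Definition vadd n (x y : vec n) : vec n := fun i => x i + y i.
Definition vsub n (x y : vec n) : vec n := fun i => x i - y i.
Definition vscale n (a : R) (x : vec n) : vec n := fun i => a * x i.
Definition dot n (x y : vec n) : R := \big[Rplus/0]_(i < n) (x i * y i).
Definition norm n (x : vec n) : R := sqrt (dot x x).
Definition mv p q (M : mat p q) (x : vec q) : vec p :=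
  fun i => \big[Rplus/0]_(j < q) (M i j * x j).

(* coordinate of x with paper (1-based) index p *)
Definition coord n (x : vec n) (p : nat) : R :=
  \big[Rplus/0]_(i < n) (if (i.+1 == p)%N then x i else 0).

(* Canonical form of (A,B) with indices 0 = k_0 < k_1 < ... < k_m = n,
   I = {k_1,...,k_m}; rows i notin I of A equal e_{i+1}^T; the j-th column
   of B is e_{k_j} (all indices 1-based as in the paper). *)
Definition in_I (k : nat -> nat) (m : nat) (p : nat) : Prop :=
  exists j, (1 <= j <= m)%N /\ p = k j.

Definition canonical_form n m (k : nat -> nat) (A : mat n n) (B : mat n m) : Prop :=
  k 0%N = 0%N /\ (forall j, (j < m)%N -> (k j < k j.+1)%N) /\ k m = n /\
  (forall i : 'I_n, ~ in_I k m i.+1 ->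
     forall j : 'I_n, A i j = if (j == i.+1 :> nat) then 1 else 0) /\
  (forall (i : 'I_n) (j : 'I_m), B i j = if (i.+1 == k j.+1)%N then 1 else 0).

Definition subI n m (k : nat -> nat) (x : vec n) : vec m :=
  fun j => coord x (k j.+1).

Definition convex n (g : vec n -> R) : Prop :=
  forall (x y : vec n) (a : R), 0 <= a <= 1 ->
    g (vadd (vscale a x) (vscale (1 - a) y)) <= a * g x + (1 - a) * g y.

Definition strongly_convex n (mu : R) (f : vec n -> R) : Prop :=
  forall (x y : vec n) (a : R), 0 <= a <= 1 ->
    f (vadd (vscale a x) (vscale (1 - a) y)) <=
      a * f x + (1 - a) * f y - mu / 2 * a * (1 - a) * (norm (vsub x y)) ^ 2.

Definition is_gradient n (f : vec n -> R) (x v : vec n) : Prop :=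
  forall eps, 0 < eps -> exists delta, 0 < delta /\
    forall h : vec n, norm h < delta ->
      Rabs (f (vadd x h) - f x - dot v h) <= eps * norm h.

Definition smooth n (l : R) (f : vec n -> R) : Prop :=
  exists df : vec n -> vec n, (forall x, is_gradient f x (df x)) /\
    forall x y, norm (vsub (df x) (df y)) <= l * norm (vsub x y).

Definition is_minimizer n (f : vec n -> R) (th : vec n) : Prop :=
  forall x, f th <= f x.

Definition steady_state_opt n m (A : mat n n) (B : mat n m)
    (f : vec n -> R) (g : vec m -> R) (xe : vec n) (ue : vec m) : Prop :=
  xe = vadd (mv A xe) (mv B ue) /\
  forall (x : vec n) (u : vec m), x = vadd (mv A x) (mv B u) ->
    f xe + g ue <= f x + g u.

(* FOSS: u_t(0) = z_{t+1}(0) - A(I,:) x_t(0), z_{t+1}(0) = (x^e_t)^I,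
   x_{t+1}(0) = A x_t(0) + B u_t(0), x_0(0) = 0.
   Note (A(I,:) x) = (A x)^I. *)
Definition foss_u n m (k : nat -> nat) (A : mat n n) (xe : nat -> vec n)
    (t : nat) (xt : vec n) : vec m :=
  vsub (@subI n m k (xe t)) (@subI n m k (mv A xt)).

Fixpoint foss_x n m (k : nat -> nat) (A : mat n n) (B : mat n m)
    (xe : nat -> vec n) (t : nat) : vec n :=
  match t with
  | O => @vzero n
  | S t' => let xt := @foss_x n m k A B xe t' in
            vadd (mv A xt) (mv B (@foss_u n m k A xe t' xt))
  end.

Definition foss_uu n m (k : nat -> nat) (A : mat n n) (B : mat n m)
    (xe : nat -> vec n) (t : nat) : vec m :=
  @foss_u n m k A xe t (foss_x k A B xe t).

(* Since (0,0) is feasible for the steady-state problem and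
   xi_t minimises g_t, optimality of (x^e_t,u^e_t) gives
     f_t(x^e_t) - f_t(theta_t) <= (f_t(0) - f_t(theta_t)) + (g_t(0) - g_t(xi_t)).
   A smooth convex function grows at most quadratically around its minimiser
   (gradient vanishes there, first-order convexity, Lipschitz gradient), while
   a strongly convex one grows at least quadratically.  Hence |x^e_t - theta_t|
   is bounded by a constant depending only on the data bounds, and so is every
   coordinate of x^e_t; this gives xe_radius.  In canonical form the steady
   input is u^e_t = (x^e_t - A x^e_t)^I, whose coordinates are bounded by
   (1 + sum |A_ij|) times that coordinate bound (ue_radius).

   Every coordinate of x_t(0) stays bounded by the coordinate bound of
   the x^e_s: rows in I are reset to (x^e_{t-1})^I, the other rows shift
   coordinates of x_{t-1}(0).  The FOSS input has the same shape as u^e_t.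
   Coordinate bounds turn into norm bounds at the price of sqrt(dimension). *)
From HB Require Import structures.
From Stdlib Require Import Reals Lra Classical FunctionalExtensionality.
From mathcomp Require Import all_boot.
Set Implicit Arguments. Unset Strict Implicit.
Local Open Scope R_scope.

(* Finite sums of reals.  Registering (Rplus, 0) as a commutative monoid
   makes the generic bigop lemmas (bigD1, big_morph, ...) available. *)
Lemma Rplus_associative : associative Rplus.
Proof. by move=> x y z; rewrite Rplus_assoc. Qed.
HB.instance Definition _ :=
  Monoid.isComLaw.Build R 0 Rplus Rplus_associative Rplus_comm Rplus_0_l.

Lemma sumR_le n (F G : 'I_n -> R) : (forall i, F i <= G i) ->
  \big[Rplus/0]_(i < n) F i <= \big[Rplus/0]_(i < n) G i.
Proof. move=> H; apply: (big_ind2 (fun x y => x <= y)) => //; [lra | move=> *; lra]. Qed.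

Lemma sumR_ge0 n (F : 'I_n -> R) : (forall i, 0 <= F i) -> 0 <= \big[Rplus/0]_(i < n) F i.
Proof. move=> H; apply: (big_ind (fun x => 0 <= x)) => //; [lra | move=> *; lra]. Qed.

Lemma sumR_abs n (F : 'I_n -> R) :
  Rabs (\big[Rplus/0]_(i < n) F i) <= \big[Rplus/0]_(i < n) Rabs (F i).
Proof.
apply: (big_ind2 (fun x y => Rabs x <= y)) => [|x1 x2 y1 y2 H1 H2|i _].
- rewrite Rabs_R0; lra.
- apply: Rle_trans (Rabs_triang _ _) _; lra.
- lra.
Qed.

Lemma sumR_single n (F : 'I_n -> R) (j0 : 'I_n) : (forall j, j != j0 -> F j = 0) ->
  \big[Rplus/0]_(j < n) F j = F j0.
Proof. by move=> H; rewrite (bigD1 j0) //= big1 ?Rplus_0_r // => j /H. Qed.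

Lemma sumR_term_le n (F : 'I_n -> R) (j0 : 'I_n) : (forall j, 0 <= F j) ->
  F j0 <= \big[Rplus/0]_(j < n) F j.
Proof.
move=> H; rewrite (bigD1 j0) //=.
rewrite -{1}(Rplus_0_r (F j0)); apply: Rplus_le_compat_l.
by apply: (big_ind (fun x => 0 <= x)) => //; [lra | move=> *; lra].
Qed.

Lemma sumR_const n (c : R) : \big[Rplus/0]_(i < n) c = INR n * c.
Proof.
elim: n => [|n IH]; first by rewrite big_ord0 /=; ring.
rewrite big_ord_recr /= IH; change (INR n * c + c = INR n.+1 * c); rewrite S_INR; ring.
Qed.

Lemma sumR_scale n a (F : 'I_n -> R) :
  \big[Rplus/0]_(i < n) (a * F i) = a * \big[Rplus/0]_(i < n) F i.
Proof. by symmetry; apply: (big_morph (fun x => a * x)); [move=> *; ring | ring]. Qed.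

Lemma dot_ge0 n (x : vec n) : 0 <= dot x x.
Proof. by apply: sumR_ge0 => i; nra. Qed.

Lemma norm_ge0 n (x : vec n) : 0 <= norm x.
Proof. exact: sqrt_pos. Qed.

Lemma norm_sq n (x : vec n) : norm x * norm x = dot x x.
Proof. exact/sqrt_sqrt/dot_ge0. Qed.

Lemma coord_le_norm n (x : vec n) i : Rabs (x i) <= norm x.
Proof.
rewrite /norm -(sqrt_Rsqr_abs (x i)); apply: sqrt_le_1_alt.
rewrite /Rsqr /dot; apply: (@sumR_term_le _ (fun i => x i * x i) i) => j; nra.
Qed.

Lemma norm_le_coord n (x : vec n) M : 0 <= M -> (forall i, Rabs (x i) <= M) ->
  norm x <= sqrt (INR n) * M.
Proof.
move=> HM H; rewrite -(sqrt_pow2 M HM) -sqrt_mult; [|exact: pos_INR | nra].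
apply: sqrt_le_1_alt; rewrite -sumR_const; apply: sumR_le => i.
have := H i; have := Rle_abs (x i); have := Rle_abs (- x i); rewrite Rabs_Ropp; nra.
Qed.

Lemma norm_congr n (x y : vec n) : (forall i, x i * x i = y i * y i) -> norm x = norm y.
Proof. by move=> H; rewrite /norm /dot; congr sqrt; apply: eq_bigr => i _. Qed.

Lemma norm_zero_sub n (x : vec n) : norm (vsub (@vzero n) x) = norm x.
Proof. by apply: norm_congr => i; rewrite /vsub /vzero; ring. Qed.

Lemma norm_scale n a (x : vec n) : norm (vscale a x) = Rabs a * norm x.
Proof.
rewrite /norm /dot /vscale.
rewrite (eq_bigr (fun i => (a * a) * (x i * x i))); last by move=> i _; ring.
rewrite sumR_scale sqrt_mult; [|nra | exact: dot_ge0].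
by rewrite -Rsqr_def sqrt_Rsqr_abs.
Qed.

Lemma dot_scale_r n a (v x : vec n) : dot v (vscale a x) = a * dot v x.
Proof. by rewrite /dot /vscale -sumR_scale; apply: eq_bigr => i _; ring. Qed.

(* Without Cauchy-Schwarz: |<x,y>| <= n |x| |y|, enough for our constants. *)
Lemma dot_le_norms n (x y : vec n) : Rabs (dot x y) <= INR n * (norm x * norm y).
Proof.
rewrite -sumR_const; apply: Rle_trans (sumR_abs _) _; apply: sumR_le => i.
by rewrite Rabs_mult; apply: Rmult_le_compat; try apply: Rabs_pos; apply: coord_le_norm.
Qed.

Lemma gradient_step n (f : vec n -> R) x v h eps : is_gradient f x v -> 0 < eps ->
  exists a, 0 < a <= 1 /\
    Rabs (f (vadd x (vscale a h)) - f x - a * dot v h) <= eps * a * norm h.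
Proof.
move=> Hg he; have [d [dpos Hd]] := Hg eps he.
have N0 := norm_ge0 h.
set q := d / (2 * (norm h + 1)).
have qpos : 0 < q by apply: Rdiv_lt_0_compat; lra.
have qe : q * (2 * (norm h + 1)) = d by rewrite /q; field; lra.
exists (Rmin 1 q); have m1 := Rmin_l 1 q; have m2 := Rmin_r 1 q.
have mpos : 0 < Rmin 1 q by apply: Rmin_pos; lra.
split; first lra.
have small : norm (vscale (Rmin 1 q) h) < d.
  by rewrite norm_scale Rabs_right; [nra | lra].
have := Hd _ small.
by rewrite dot_scale_r norm_scale (Rabs_right _ (Rle_ge _ _ (Rlt_le _ _ mpos))) Rmult_assoc.
Qed.

(* Fermat's rule: the gradient vanishes at a minimiser, since a small step
   against a nonzero gradient would strictly decrease f. *)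
Lemma gradient_at_minimizer n (f : vec n -> R) th v :
  is_minimizer f th -> is_gradient f th v -> forall i, v i = 0.
Proof.
move=> Hm Hg.
have vv0 : dot v v <= 0.
  apply: Rnot_lt_le => vvpos.
  have sp : 0 < norm v by apply: sqrt_lt_R0.
  have sq := norm_sq v.
  have [a [ha Ha]] :=
    gradient_step (vscale (-1) v) Hg (Rlt_mult_inv_pos _ 2 sp Rlt_0_2).
  move: Ha; rewrite dot_scale_r norm_scale Rabs_Ropp Rabs_R1 Rmult_1_l.
  have := Hm (vadd th (vscale a (vscale (-1) v))).
  set F := f (vadd _ _) => hmin herr.
  have := Rle_abs (F - f th - a * (-1 * dot v v)).
  have : norm v * / 2 * a * norm v = a * dot v v / 2 by rewrite -sq; field.
  nra.
move=> i; have := @sumR_term_le _ (fun i => v i * v i) i (fun j => ltac:(nra)).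
rewrite -/(dot v v); nra.
Qed.

Lemma convex_gradient_ineq n (f : vec n -> R) x v y : convex f -> is_gradient f x v ->
  dot v (vsub y x) <= f y - f x.
Proof.
move=> Hc Hg; apply: Rnot_lt_le => Hlt.
set h := vsub y x; have N0 := norm_ge0 h.
set gap := dot v h - (f y - f x).
have gpos : 0 < gap by rewrite /gap /h; lra.
set e := gap / (norm h + 1).
have epos : 0 < e by apply: Rdiv_lt_0_compat; lra.
have ee : e * (norm h + 1) = gap by rewrite /e; field; lra.
have [a [ha Ha]] := gradient_step h Hg epos.
have segment : vadd x (vscale a h) = vadd (vscale a y) (vscale (1 - a) x).
  by apply: functional_extensionality => i; rewrite /vadd /vscale /h /vsub; ring.
have := Hc y x a ltac:(lra); rewrite -segment.
have := Rle_abs (- (f (vadd x (vscale a h)) - f x - a * dot v h)); rewrite Rabs_Ropp.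
move=> herr hconv.
have : a * (f y - f x) >= a * dot v h - e * a * norm h by lra.
have slope : f y - f x >= dot v h - e * norm h by apply: Rnot_lt_ge => c; nra.
rewrite /gap in ee; lra.
Qed.

Lemma strongly_convex_convex n mu (f : vec n -> R) : 0 < mu ->
  strongly_convex mu f -> convex f.
Proof.
move=> mpos Hs x y a ha; have := Hs x y a ha.
have := pow2_ge_0 (norm (vsub x y)).
have : 0 <= mu / 2 * a * (1 - a) by apply: Rmult_le_pos; [apply: Rmult_le_pos|]; lra.
nra.
Qed.

Lemma smooth_convex_growth n (f : vec n -> R) l th x :
  smooth l f -> convex f -> is_minimizer f th ->
  f x - f th <= INR n * Rabs l * (norm (vsub x th) * norm (vsub x th)).
Proof.
move=> [df [Hg Hl]] Hc Hm.
have grad0 := gradient_at_minimizer Hm (Hg th).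
have hc := convex_gradient_ineq th Hc (Hg x).
have e1 : norm (df x) = norm (vsub (df x) (df th)).
  by apply: norm_congr => i; rewrite /vsub grad0; ring.
have e2 : norm (vsub th x) = norm (vsub x th).
  by apply: norm_congr => i; rewrite /vsub; ring.
have hd := dot_le_norms (df x) (vsub th x); rewrite e2 in hd.
have hl := Hl x th; rewrite -e1 in hl.
have := Rle_abs (- dot (df x) (vsub th x)); rewrite Rabs_Ropp.
move=> hneg; set N := norm (vsub x th) in hd hl *; have N0 : 0 <= N := norm_ge0 _.
have grad_le : norm (df x) <= Rabs l * N.
  by apply: Rle_trans hl _; apply: Rmult_le_compat_r => //; apply: Rle_abs.
have : INR n * (norm (df x) * N) <= INR n * Rabs l * (N * N).
  by rewrite Rmult_assoc; apply: Rmult_le_compat_l; [exact: pos_INR | nra].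
lra.
Qed.

Lemma strongly_convex_growth n mu (f : vec n -> R) th x : 0 < mu ->
  strongly_convex mu f -> is_minimizer f th ->
  mu / 4 * (norm (vsub x th) * norm (vsub x th)) <= f x - f th.
Proof.
move=> mpos Hs Hm.
have := Hs x th (/ 2) ltac:(lra); have := Hm (vadd (vscale (/ 2) x) (vscale (1 - / 2) th)).
rewrite /= Rmult_1_r; nra.
Qed.

(* Optimal steady states.  Comparing with the feasible point (0,0) and using
   g(xi) <= g(u^e) bounds f(x^e) by values of f and g at 0. *)
Lemma steady_state_gap n m (A : mat n n) (B : mat n m) f g xi xe ue :
  steady_state_opt A B f g xe ue -> is_minimizer g xi ->
  f xe <= f (@vzero n) + (g (@vzero m) - g xi).
Proof.
move=> [_ Hopt] Hxi.
have zero_feasible : @vzero n = vadd (mv A (@vzero n)) (mv B (@vzero m)).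
  apply: functional_extensionality => i.
  by rewrite /vadd /mv /vzero !big1 //; [ring | move=> *; ring | move=> *; ring].
have := Hopt _ _ zero_feasible; have := Hxi ue; lra.
Qed.

(* Upper bound on (f_t(0) - f_t(theta_t)) + (g_t(0) - g_t(xi_t)) obtained from
   smooth_convex_growth, given |theta_t| <= thbar and |xi_t| <= xibar. *)
Definition growth_budget n m (l_f l_g thbar xibar : R) : R :=
  INR n * Rabs l_f * (thbar * thbar) + INR m * Rabs l_g * (xibar * xibar).

Definition xe_coord_bound n m (mu l_f l_g thbar xibar : R) : R :=
  Rabs thbar + sqrt (4 * growth_budget n m l_f l_g thbar xibar / mu).

Definition xe_radius n m (mu l_f l_g thbar xibar : R) : R :=
  sqrt (INR n) * xe_coord_bound n m mu l_f l_g thbar xibar.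

Lemma xe_coord_bound_ge0 n m mu l_f l_g thbar xibar :
  0 <= xe_coord_bound n m mu l_f l_g thbar xibar.
Proof.
have := sqrt_pos (4 * growth_budget n m l_f l_g thbar xibar / mu).
by have := Rabs_pos thbar; rewrite /xe_coord_bound; lra.
Qed.

Lemma xe_radius_ge0 n m mu l_f l_g thbar xibar : 0 <= xe_radius n m mu l_f l_g thbar xibar.
Proof. exact/Rmult_le_pos/xe_coord_bound_ge0/sqrt_pos. Qed.

Lemma coord_le_shift n (x y : vec n) D T i :
  norm (vsub x y) <= D -> norm y <= T -> Rabs (x i) <= Rabs T + D.
Proof.
move=> HD HT; have := coord_le_norm (vsub x y) i; have := coord_le_norm y i.
have := Rle_abs T; have := Rabs_triang (x i - y i) (y i).
have -> : x i - y i + y i = x i by ring.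
rewrite /vsub in HD *; lra.
Qed.

Lemma steady_state_bound n m (A : mat n n) (B : mat n m) mu l_f l_g thbar xibar
    f g theta xi xe ue : 0 < mu ->
  strongly_convex mu f -> smooth l_f f -> convex g -> smooth l_g g ->
  is_minimizer f theta -> norm theta <= thbar ->
  is_minimizer g xi -> norm xi <= xibar ->
  steady_state_opt A B f g xe ue ->
  norm xe <= xe_radius n m mu l_f l_g thbar xibar.
Proof.
move=> mpos Hfs Hfl Hgc Hgl Hth Hthb Hxi Hxib Hss.
set C := growth_budget n m l_f l_g thbar xibar.
have gap := steady_state_gap Hss Hxi.
have growf := smooth_convex_growth (@vzero n) Hfl (strongly_convex_convex mpos Hfs) Hth.
have growg := smooth_convex_growth (@vzero m) Hgl Hgc Hxi.
have lower := strongly_convex_growth xe mpos Hfs Hth.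
rewrite norm_zero_sub in growf; rewrite norm_zero_sub in growg.
have budget : mu / 4 * (norm (vsub xe theta) * norm (vsub xe theta)) <= C.
  have sq_le c a b : 0 <= c -> 0 <= a -> a <= b -> c * (a * a) <= c * (b * b).
    by move=> c0 a0 ab; apply: Rmult_le_compat_l => //; apply: Rmult_le_compat.
  have := sq_le _ _ _ (Rmult_le_pos _ _ (pos_INR n) (Rabs_pos l_f)) (norm_ge0 theta) Hthb.
  have := sq_le _ _ _ (Rmult_le_pos _ _ (pos_INR m) (Rabs_pos l_g)) (norm_ge0 xi) Hxib.
  rewrite /C /growth_budget; lra.
have dist : norm (vsub xe theta) <= sqrt (4 * C / mu).
  rewrite -(sqrt_square _ (norm_ge0 (vsub xe theta))); apply: sqrt_le_1_alt.
  apply: (Rmult_le_reg_l (mu / 4)); first lra.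
  by have -> : mu / 4 * (4 * C / mu) = C by field; lra.
apply: norm_le_coord; first exact: xe_coord_bound_ge0.
by move=> i; apply: coord_le_shift dist Hthb.
Qed.

Lemma k_increasing (m : nat) (k : nat -> nat) :
  (forall j, (j < m)%N -> (k j < k j.+1)%N) ->
  forall j1 j2, (j1 < j2)%N -> (j2 <= m)%N -> (k j1 < k j2)%N.
Proof.
move=> Hk j1; elim=> [//|j2 IH] h1 h2.
have := Hk j2 h2; rewrite leq_eqVlt in h1; case/orP: h1 => [/eqP [->] //|h1].
exact: ltn_trans (IH h1 (ltnW h2)).
Qed.

Lemma k_injective (m : nat) (k : nat -> nat) :
  (forall j, (j < m)%N -> (k j < k j.+1)%N) ->
  forall j1 j2, (j1 <= m)%N -> (j2 <= m)%N -> k j1 = k j2 -> j1 = j2.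
Proof.
move=> Hk j1 j2 h1 h2 e.
case: (ltngtP j1 j2) => // c.
- by have := k_increasing Hk c h2; rewrite e ltnn.
- by have := k_increasing Hk c h1; rewrite e ltnn.
Qed.

Lemma coord_succ n (x : vec n) (i : 'I_n) : coord x i.+1 = x i.
Proof.
rewrite /coord (@sumR_single _ (fun j : 'I_n => if (j.+1 == i.+1)%N then x j else 0) i) ?eqxx // => j hj.
by rewrite eqSS; case: eqP => // /ord_inj e; rewrite e eqxx in hj.
Qed.

Lemma row_of_input n m k (A : mat n n) (B : mat n m) : canonical_form k A B ->
  forall j : 'I_m, exists i : 'I_n, (i.+1 = k j.+1)%N.
Proof.
move=> [Hk0 [Hk [Hkm _]]] j.
have pos : (0 < k j.+1)%N by rewrite -{1}Hk0; exact: (k_increasing Hk (ltn0Sn j) (ltn_ord j)).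
have le_n : (k j.+1 <= n)%N.
  rewrite -Hkm; have := ltn_ord j; rewrite leq_eqVlt; case/orP => [/eqP -> //|c].
  exact/ltnW/(k_increasing Hk c (leqnn m)).
have lt_n : ((k j.+1).-1 < n)%N by case: (k j.+1) pos le_n.
by exists (Ordinal lt_n) => /=; case: (k j.+1) pos.
Qed.

Lemma inputs_le_states n m k (A : mat n n) (B : mat n m) : canonical_form k A B ->
  (m <= n)%N.
Proof.
move=> [Hk0 [Hk [Hkm _]]].
have k_ge_index j : (j <= m)%N -> (j <= k j)%N.
  elim: j => [//|j IH] hj; exact: leq_ltn_trans (IH (ltnW hj)) (Hk j hj).
by rewrite -Hkm; apply: k_ge_index.
Qed.

Lemma mvB_in n m k (A : mat n n) (B : mat n m) (u : vec m) (i : 'I_n) (j : 'I_m) :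
  canonical_form k A B -> (i.+1 = k j.+1)%N -> mv B u i = u j.
Proof.
move=> [_ [Hk [_ [_ HB]]]] e.
rewrite /mv (@sumR_single _ (fun j0 => B i j0 * u j0) j); first by rewrite HB e eqxx; ring.
move=> j0 hj; rewrite HB; case: eqP => [e2|_]; last ring.
have : j0.+1 = j.+1 by apply: (k_injective Hk); rewrite ?ltn_ord // -e2 e.
by move=> [] /ord_inj h; rewrite h eqxx in hj.
Qed.

Lemma mvB_out n m k (A : mat n n) (B : mat n m) (u : vec m) (i : 'I_n) :
  canonical_form k A B -> ~ in_I k m i.+1 -> mv B u i = 0.
Proof.
move=> [_ [_ [_ [_ HB]]]] hn.
rewrite /mv big1 // => j _; rewrite HB; case: eqP => [e|_]; last ring.
by exfalso; apply: hn; exists j.+1; rewrite ltn_ord.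
Qed.

(* A row outside I shifts the next coordinate (or yields 0 in the last row). *)
Lemma mvA_out n m k (A : mat n n) (B : mat n m) (x : vec n) (i : 'I_n) M :
  canonical_form k A B -> ~ in_I k m i.+1 -> 0 <= M -> (forall j, Rabs (x j) <= M) ->
  Rabs (mv A x i) <= M.
Proof.
move=> [_ [_ [_ [HA _]]]] hn HM Hx.
case: (ltnP i.+1 n) => c.
- rewrite /mv (@sumR_single _ (fun j => A i j * x j) (Ordinal c)); first by rewrite HA //= eqxx Rmult_1_l.
  move=> j hj; rewrite HA //; case: eqP => [e|_]; last ring.
  by move: hj; rewrite (@ord_inj _ j (Ordinal c)) ?eqxx.
- rewrite /mv big1 ?Rabs_R0 // => j _; rewrite HA //; case: eqP => [e|_]; last ring.
  by have := ltn_ord j; rewrite e ltnNge c.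
Qed.

(* Entrywise l1-mass of A; it bounds the gain of A in the sup-norm. *)
Definition abs_mass n (A : mat n n) : R :=
  \big[Rplus/0]_(i < n) \big[Rplus/0]_(j < n) Rabs (A i j).

Lemma abs_mass_ge0 n (A : mat n n) : 0 <= abs_mass A.
Proof. by apply: sumR_ge0 => i; apply: sumR_ge0 => j; apply: Rabs_pos. Qed.

Lemma mvA_bound n (A : mat n n) (x : vec n) (i : 'I_n) M :
  0 <= M -> (forall j, Rabs (x j) <= M) -> Rabs (mv A x i) <= abs_mass A * M.
Proof.
move=> HM Hx; apply: Rle_trans (sumR_abs _) _.
apply: (@Rle_trans _ (\big[Rplus/0]_(j < n) Rabs (A i j) * M)).
  rewrite Rmult_comm -sumR_scale; apply: sumR_le => j; rewrite Rabs_mult.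
  by have := Hx j; have := Rabs_pos (A i j); have := Rabs_pos (x j); nra.
apply: Rmult_le_compat_r => //.
apply: (@sumR_term_le _ (fun i => \big[Rplus/0]_(j < n) Rabs (A i j)) i) => i0.
by apply: sumR_ge0 => j; apply: Rabs_pos.
Qed.

(* Both the steady input and the FOSS input have coordinates of the form
   a - (A x)_i with |a| and the coordinates of x bounded by X. *)
Lemma input_coord_bound n (A : mat n n) (x : vec n) (a : R) (i : 'I_n) X :
  0 <= X -> Rabs a <= X -> (forall j, Rabs (x j) <= X) ->
  Rabs (a - mv A x i) <= (1 + abs_mass A) * X.
Proof.
move=> HX Ha Hx; have := mvA_bound A i HX Hx.
have := Rabs_triang a (- mv A x i); rewrite Rabs_Ropp; rewrite /Rminus; lra.
Qed.

Lemma steady_input_coord_bound n m k (A : mat n n) (B : mat n m) xe ue X :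
  canonical_form k A B -> xe = vadd (mv A xe) (mv B ue) -> 0 <= X ->
  (forall i, Rabs (xe i) <= X) -> forall j, Rabs (ue j) <= (1 + abs_mass A) * X.
Proof.
move=> cf Heq HX Hco j.
have [i ei] := row_of_input cf j.
have := congr1 (fun v => v i) Heq; rewrite /vadd (mvB_in _ cf ei) => e.
have -> : ue j = xe i - mv A xe i by rewrite {1}e; ring.
exact: input_coord_bound.
Qed.

Lemma foss_state_coord_bound n m k (A : mat n n) (B : mat n m) X N xe :
  canonical_form k A B -> 0 <= X -> (forall s i, (s < N)%N -> Rabs (xe s i) <= X) ->
  forall t, (t <= N)%N -> forall i, Rabs (foss_x k A B xe t i) <= X.
Proof.
move=> cf HX Hxe; elim=> [|t IH] ht i; first by rewrite /= /vzero Rabs_R0.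
rewrite /= /vadd.
case: (classic (in_I k m i.+1)) => [[[|j] [/andP [j1 j2] ej]] //|hn].
- rewrite (mvB_in _ cf (j := Ordinal j2) ej) /foss_u /vsub /subI /= -ej !coord_succ.
  have -> : forall a b : R, a + (b - a) = b by move=> a b; ring.
  exact: Hxe.
- by rewrite (mvB_out _ cf hn) Rplus_0_r; apply: (mvA_out cf hn HX (IH (ltnW ht))).
Qed.

Lemma foss_input_coord_bound n m k (A : mat n n) (B : mat n m) X xe t x :
  canonical_form k A B -> 0 <= X ->
  (forall i, Rabs (xe t i) <= X) -> (forall i, Rabs (x i) <= X) ->
  forall j, Rabs (@foss_u n m k A xe t x j) <= (1 + abs_mass A) * X.
Proof.
move=> cf HX Hxe Hx j; have [i ei] := row_of_input cf j.
by rewrite /foss_u /vsub /subI -ei !coord_succ; apply: input_coord_bound.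
Qed.

Lemma sqrt_dim_absorb n m k (A : mat n n) (B : mat n m) c :
  canonical_form k A B -> 0 <= c -> sqrt (INR m) * c <= sqrt (INR n) * (sqrt (INR m) * c).
Proof.
move=> cf hc; have hmn := inputs_le_states cf.
have P : 0 <= sqrt (INR m) * c by apply: Rmult_le_pos => //; apply: sqrt_pos.
case: (posnP m) => [-> | mpos]; first by rewrite /= sqrt_0; lra.
have : 1 <= sqrt (INR n).
  by rewrite -sqrt_1; apply/sqrt_le_1_alt/(le_INR 1)/leP/(leq_trans mpos hmn).
nra.
Qed.

Definition ue_radius n m (A : mat n n) (mu l_f l_g thbar xibar : R) : R :=
  sqrt (INR m) * ((1 + abs_mass A) * xe_radius n m mu l_f l_g thbar xibar).

Theorem lemma4 (n m : nat) (k : nat -> nat) (A : mat n n) (B : mat n m)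
    (mu_f l_f l_g thbar xibar : R) :
  canonical_form k A B -> 0 < mu_f ->
  exists xebar uebar : R,
    forall (N : nat) (f : nat -> vec n -> R) (g : nat -> vec m -> R)
           (theta : nat -> vec n) (xi : nat -> vec m)
           (xe : nat -> vec n) (ue : nat -> vec m),
      (forall t, strongly_convex mu_f (f t) /\ smooth l_f (f t)) ->
      (forall t, convex (g t) /\ smooth l_g (g t)) ->
      (forall t, is_minimizer (f t) (theta t) /\ norm (theta t) <= thbar) ->
      (forall t, is_minimizer (g t) (xi t) /\ norm (xi t) <= xibar) ->
      (forall t, steady_state_opt A B (f t) (g t) (xe t) (ue t)) ->
      (forall t, (t < N)%N -> norm (xe t) <= xebar /\ norm (ue t) <= uebar) /\
      (forall t, (t <= N)%N -> norm (foss_x k A B xe t) <= sqrt (INR n) * xebar) /\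
      (forall t, (t < N)%N -> norm (foss_uu k A B xe t) <= sqrt (INR n) * uebar).
Proof.
move=> cf mpos.
set X := xe_radius n m mu_f l_f l_g thbar xibar.
exists X, (@ue_radius n m A mu_f l_f l_g thbar xibar).
move=> N f g theta xi xe ue Hf Hg Hth Hxi Hss.
have X0 : 0 <= X := xe_radius_ge0 _ _ _ _ _ _ _.
have U0 : 0 <= (1 + abs_mass A) * X by have := abs_mass_ge0 A; nra.
have Hxe t : norm (xe t) <= X.
  by have [? ?] := Hf t; have [? ?] := Hg t; have [? ?] := Hth t; have [? ?] := Hxi t;
     exact: steady_state_bound (Hss t).
have Hco t i : Rabs (xe t i) <= X := Rle_trans _ _ _ (coord_le_norm _ i) (Hxe t).
have Hx := foss_state_coord_bound cf X0 (N := N) (fun s i _ => Hco s i).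
split; [|split].
- move=> t _; split; first exact: Hxe.
  exact/norm_le_coord/(steady_input_coord_bound cf (proj1 (Hss t)) X0).
- by move=> t ht; apply: norm_le_coord => //; apply: Hx.
- move=> t ht; apply: Rle_trans (sqrt_dim_absorb cf U0).
  apply: norm_le_coord => //; apply: (foss_input_coord_bound cf X0 (Hco t)).
  exact: Hx (ltnW ht).
Qed.
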